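(* Every graph $G\in\mathcal{V}_1$ can be properly vertex colored with at most $3$ colors. Moreover, a graph $G\in\mathcal{V}_1$ can be properly vertex colored with at most $2$ colors if and only if $G$ contains no cycle of odd length.
   Context: All graphs are finite simple graphs. For a vertex $x$, $S(x)$ is the subgraph induced by the neighbors of $x$. $\mathcal{V}_1$ is the class of one-dimensional varieties, defined as follows: $G\in\mathcal{V}_1$ if every unit sphere $S(x)$ is a nonempty graph without edges (equivalently, $G$ is triangle-free and has no isolated vertices), and, writing $\sigma(G)$ for the subgraph induced by the vertices of degree at least $3$ (the singularities) and $\delta(G)$ for the subgraph induced by the vertices of degree $1$ (the boundary), both $\sigma(G)$ and $\delta(G)$ have no edges. *)

(* A finite simple graph is a symmetric irreflexive
   relation e : rel T on a finType T. *)
From mathcomp Require Import all_boot.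
Set Implicit Arguments. Unset Strict Implicit. Unset Printing Implicit Defensive.

Section Graphs.
Variables (T : finType) (e : rel T).

Definition nbhd (x : T) : {set T} := [set y | e x y].
Definition deg (x : T) : nat := #|nbhd x|.

Definition sphere_nonempty_edgeless (x : T) : Prop :=
  nbhd x != set0 /\ (forall y z, y \in nbhd x -> z \in nbhd x -> ~~ e y z).

Definition inV1 : Prop :=
  [/\ forall x, sphere_nonempty_edgeless x,
      (forall x y, 3 <= deg x -> 3 <= deg y -> ~~ e x y)
    &
      (forall x y, deg x = 1 -> deg y = 1 -> ~~ e x y)].

Definition proper_coloring (k : nat) (f : T -> 'I_k) : Prop :=
  forall x y, e x y -> f x != f y.

Definition colorable (k : nat) : Prop := exists f : T -> 'I_k, proper_coloring f.

Definition is_graph_cycle (c : seq T) : Prop :=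
  [/\ 3 <= size c, uniq c & cycle e c].

Definition has_odd_cycle : Prop :=
  exists c : seq T, is_graph_cycle c /\ odd (size c).

End Graphs.

From mathcomp Require Import all_boot zify.
Set Implicit Arguments. Unset Strict Implicit. Unset Printing Implicit Defensive.

(* Three colours: since no two vertices of degree >= 3 are adjacent, every
   nonempty vertex set A contains a vertex with at most two neighbours in A
   (a vertex with three neighbours in A has a neighbour in A which cannot have
   three as well), so the graph is 2-degenerate and greedy colouring needs only
   three colours.
   Two colours: a proper 2-colouring flips along every edge, so closed walks are
   even.  Conversely, colour x by the side of the bipartite double cover on
   which x is reached from the root of its component; this is well defined
   because an odd closed walk would contain an odd cycle. *)

Section Degeneracy.
Variables (T : finType) (e : rel T).
Hypotheses (e_sym : symmetric e) (e_irr : irreflexive e).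

Definition deg_in (A : {set T}) (v : T) : nat := #|[set y in A | e v y]|.

Definition degenerate (k : nat) : Prop :=
  forall A : {set T}, A != set0 -> exists2 v, v \in A & deg_in A v <= k.

Lemma exists_color_notin k (S : {set 'I_k.+1}) : #|S| <= k -> exists c, c \notin S.
Proof.
move=> cardS; have : 0 < #|~: S| by move: (cardsC S); rewrite card_ord; lia.
by case/card_gt0P => c; rewrite inE; exists c.
Qed.

Variable k : nat.
Hypothesis e_degenerate : degenerate k.

Lemma degenerate_colorable_on n (A : {set T}) : #|A| <= n ->
  exists f : T -> 'I_k.+1, {in A &, forall x y, e x y -> f x != f y}.
Proof.
elim: n A => [|n IH] A cardA.
  by exists (fun=> ord0) => x y; rewrite (cards0_eq (_ : #|A| = 0)) ?inE //; lia.
have [->|/e_degenerate[v Av degv]] := eqVneq A set0.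
  by exists (fun=> ord0) => x y; rewrite inE.
have [f f_proper] : exists f : T -> 'I_k.+1, {in A :\ v &, forall x y, e x y -> f x != f y}.
  by apply: IH; move: cardA; rewrite (cardsD1 v A) Av.
set N := [set y in A | e v y].
have [c c_free] : exists c, c \notin f @: N.
  by apply: exists_color_notin; apply: leq_trans (leq_imset_card _ _) degv.
have c_neq y : y \in A -> e v y -> c != f y.
  by move=> Ay evy; apply: contraNneq c_free => ->; apply: imset_f; rewrite inE Ay.
exists (fun x => if x == v then c else f x) => x y Ax Ay exy.
case: (eqVneq x v) => [xv|xv]; case: (eqVneq y v) => [yv|yv].
- by move: exy; rewrite xv yv e_irr.
- by apply: c_neq; rewrite // -xv.
- by rewrite eq_sym; apply: c_neq; rewrite // -yv e_sym.
- by apply: f_proper; rewrite // !inE ?xv ?yv.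
Qed.

Lemma degenerate_colorable : colorable e k.+1.
Proof.
have [f f_proper] := degenerate_colorable_on (leqnn #|[set: T]|).
by exists f => x y; apply: f_proper; rewrite inE.
Qed.

End Degeneracy.

Lemma sigma_edgeless_2degenerate (T : finType) (e : rel T) :
  (forall x y, 3 <= deg e x -> 3 <= deg e y -> ~~ e x y) ->
  degenerate e 2.
Proof.
move=> sigma_edgeless A /set0Pn[v0 Av0].
have deg_ge w : 2 < deg_in e A w -> 3 <= deg e w.
  move=> degw; apply: leq_trans degw (subset_leq_card _).
  by apply/subsetP => y; rewrite !inE => /andP[].
case: (leqP (deg_in e A v0) 2) => [|deg_v0]; first by exists v0.
have /set0Pn[u] : [set y in A | e v0 y] != set0 by rewrite -card_gt0 (ltn_trans _ deg_v0).
rewrite inE => /andP[Au ev0u].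
case: (leqP (deg_in e A u) 2) => [|deg_u]; first by exists u.
by move: (sigma_edgeless _ _ (deg_ge _ deg_v0) (deg_ge _ deg_u)); rewrite ev0u.
Qed.

Section Parity.
Variables (U : Type) (r : rel U) (side : U -> bool).
Hypothesis side_flip : forall x y, r x y -> side y = ~~ side x.

Lemma path_side x p : path r x p -> side (last x p) = side x (+) odd (size p).
Proof.
elim: p x => [|y p IH] x /=; first by rewrite addbF.
by case/andP => /side_flip side_y /IH ->; rewrite side_y addNb addbN.
Qed.

Lemma cycle_even p : cycle r p -> ~~ odd (size p).
Proof.
case: p => [|x p] //= /path_side; rewrite last_rcons size_rcons /=.
by case: (side x); case: (odd (size p)).
Qed.

End Parity.

Section OddCycles.
Variables (T : finType) (e : rel T).
Hypotheses (e_sym : symmetric e) (e_irr : irreflexive e).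

Lemma colorable2_no_odd_cycle : colorable e 2 -> ~ has_odd_cycle e.
Proof.
case=> f f_proper [c [[_ _ c_cycle] c_odd]].
have side_flip x y : e x y -> (f y == ord0) = ~~ (f x == ord0).
  move/f_proper; case: (f x) (f y) => [[|[|i]] ?] [[|[|j]] ?] //=.
by rewrite (negbTE (cycle_even side_flip c_cycle)) in c_odd.
Qed.

Lemma not_uniq_split (s : seq T) : ~~ uniq s ->
  exists y s1 s2 s3, s = s1 ++ y :: s2 ++ y :: s3.
Proof.
elim: s => [|z s IH] //=; rewrite negb_and negbK.
case z_s: (z \in s) => /=.
  by case/splitPr: z_s => s2 s3 _; exists z, [::], s2, s3.
by case/IH => y [s1 [s2 [s3 ->]]]; exists y, (z :: s1), s2, s3.
Qed.

Lemma cycle_split y p q :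
  cycle e (y :: p ++ y :: q) -> cycle e (y :: p) /\ cycle e (y :: q).
Proof.
rewrite /= rcons_cat cat_path /= => /and3P[p_path last_y q_path].
by rewrite rcons_path p_path last_y.
Qed.

Lemma odd_closed_walk_odd_cycle s : cycle e s -> odd (size s) -> has_odd_cycle e.
Proof.
elim: {s}_.+1 {-2}s (ltnSn (size s)) => // n IH s size_s s_cycle s_odd.
have [s_uniq|] := boolP (uniq s).
  exists s; split => //; split => //.
  case: s s_cycle s_odd {size_s s_uniq} => [|x [|y [|z q]]] //=.
  by rewrite e_irr.
case/not_uniq_split => y [s1 [s2 [s3 def_s]]].
have /cycle_split[cycle_l cycle_r] : cycle e (y :: s2 ++ y :: s3 ++ s1).
  move: s_cycle; rewrite -(rot_cycle (size s1)) def_s rot_size_cat.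
  by rewrite -cat1s catA -catA.
have size_lr : size s = size (y :: s2) + size (y :: s3 ++ s1).
  by rewrite def_s /= !size_cat /= !size_cat /=; lia.
move: s_odd; rewrite size_lr oddD; case: (boolP (odd _)) => /= [odd_l _|_ odd_r].
- by apply: (IH (y :: s2)); move: size_s; rewrite // size_lr /=; lia.
- by apply: (IH (y :: s3 ++ s1)); move: size_s; rewrite // size_lr /=; lia.
Qed.

(* The bipartite double cover of the graph: the boolean records the parity of
   the walk used to reach a vertex. *)
Definition cover : rel (T * bool) := fun u v => e u.1 v.1 && (v.2 == ~~ u.2).

Lemma cover_sym : symmetric cover.
Proof. by move=> [x a] [y b]; rewrite /cover /= e_sym; case: a; case: b. Qed.

Lemma cover_lift u v b : connect e u v -> exists c, connect cover (u, b) (v, c).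
Proof.
case/connectP => p; elim: p u b => [|w p IH] u b /=.
  by move=> _ ->; exists b.
case/andP => euw p_path p_last; have [c conn] := IH w (~~ b) p_path p_last.
by exists c; apply: connect_trans conn; apply: connect1; rewrite /cover /= euw eqxx.
Qed.

Lemma cover_flip u v : cover u v -> v.2 = ~~ u.2.
Proof. by case/andP => _ /eqP. Qed.

Lemma cover_proj u v : cover u v -> e u.1 v.1.
Proof. by case/andP. Qed.

Hypothesis no_odd_cycle : ~ has_odd_cycle e.

Lemma cover_no_flip x : ~~ connect cover (x, false) (x, true).
Proof.
apply/negP => /connectP[p p_path p_last].
have := path_side cover_flip p_path; rewrite -p_last /=.
case/lastP: p p_path p_last => [|q z] // p_path.
rewrite last_rcons size_rcons /= => z_def; rewrite -{}z_def in p_path => q_odd.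
apply: no_odd_cycle; apply: (@odd_closed_walk_odd_cycle (x :: map fst q)).
  by have := homo_path cover_proj p_path; rewrite map_rcons.
by rewrite /= size_map -q_odd.
Qed.

Lemma no_odd_cycle_colorable2 : colorable e 2.
Proof.
pose side x := connect cover (root e x, false) (x, true).
exists (fun x => if side x then ord0 else ord_max) => x y exy.
suff : side x != side y by case: (side x); case: (side y).
have conn_sym := sym_connect_sym e_sym.
have root_xy : root e x = root e y by apply/(rootP conn_sym)/connect1.
have root_x : connect e (root e x) x by rewrite conn_sym connect_root.
have cover_xy b : cover (x, b) (y, ~~ b) by rewrite /cover /= exy eqxx.
rewrite /side -root_xy; set r := root e x.
case side_x: (connect cover (r, false) (x, true)).
  case side_y: (connect cover (r, false) (y, true)) => //; case/negP: (cover_no_flip y).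
  apply: connect_trans _ side_y; rewrite (sym_connect_sym cover_sym).
  exact: connect_trans side_x (connect1 (cover_xy true)).
have [[] conn_x] := cover_lift false root_x; first by rewrite conn_x in side_x.
by rewrite (connect_trans conn_x (connect1 (cover_xy false))).
Qed.

End OddCycles.

Theorem mainTheorem15 (T : finType) (e : rel T)
  (e_sym : symmetric e) (e_irr : irreflexive e) (HG : inV1 e) :
  colorable e 3 /\ (colorable e 2 <-> ~ has_odd_cycle e).
Proof.
case: HG => _ sigma_edgeless _; split.
  apply: (degenerate_colorable e_sym e_irr).
  exact: sigma_edgeless_2degenerate.
split; first exact: colorable2_no_odd_cycle.
exact: no_odd_cycle_colorable2.
Qed.
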